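(* Let $\Phi$ be a Leonard system in $\mathcal A$ with eigenvalue sequence $\theta_0,\dots,\theta_d$ and dual eigenvalue sequence $\theta^*_0,\dots,\theta^*_d$, let $u_0,\dots,u_d$ be its polynomials as defined below, and let $u^*_0,\dots,u^*_d$ be the corresponding polynomials for $\Phi^*$. Then $$u_i(\theta_j)=u^*_j(\theta^*_i)\qquad(0\le i,j\le d).$$
   Context: Let $\mathbb K$ be a field, $d\ge 0$ an integer, and $\mathcal A$ a $\mathbb K$-algebra isomorphic to $\mathrm{Mat}_{d+1}(\mathbb K)$, with identity $I$ and trace $\mathrm{tr}$. An element $A\in\mathcal A$ is multiplicity-free if it has $d+1$ mutually distinct eigenvalues in $\mathbb K$; if $\theta_0,\dots,\theta_d$ is an ordering of them, the primitive idempotent of $A$ associated with $\theta_i$ is $E_i=\prod_{j\ne i}(A-\theta_jI)/(\theta_i-\theta_j)$. A Leonard system in $\mathcal A$ is a sequence $\Phi=(A;A^*;\{E_i\}_{i=0}^d;\{E^*_i\}_{i=0}^d)$ such that: (i) $A,A^*$ are multiplicity-free; (ii) $E_0,\dots,E_d$ is an ordering of the primitive idempotents of $A$; (iii) $E^*_0,\dots,E^*_d$ is an ordering of those of $A^*$; (iv) $E_iA^*E_j=0$ if $|i-j|>1$ and $\ne0$ if $|i-j|=1$ $(0\le i,j\le d)$; (v) $E^*_iAE^*_j=0$ if $|i-j|>1$ and $\neq0$ if $|i-j|=1$ $(0\le i,j\le d)$. $\theta_i$ (resp. $\theta^*_i$) is the eigenvalue of $A$ (resp. $A^*$) associated with $E_i$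 (resp. $E^*_i$). The dual Leonard system is $\Phi^*=(A^*;A;\{E^*_i\}_{i=0}^d;\{E_i\}_{i=0}^d)$. Define $a_i=\mathrm{tr}(E^*_iA)$ $(0\le i\le d)$, $x_i=\mathrm{tr}(E^*_iAE^*_{i-1}A)$ $(1\le i\le d)$, $x_0=0$, and polynomials $p_0,\dots,p_{d+1}$ by $p_0=1$, $p_{-1}=0$, $\lambda p_i=p_{i+1}+a_ip_i+x_ip_{i-1}$ $(0\le i\le d)$. One has $p_i(\theta_0)\ne0$ for $0\le i\le d$, and $u_i:=p_i/p_i(\theta_0)$ $(0\le i\le d)$. *)

From HB Require Import structures.
From mathcomp Require Import all_boot all_order all_algebra.
Set Implicit Arguments. Unset Strict Implicit. Unset Printing Implicit Defensive.
Import Order.TTheory GRing.Theory Num.Theory.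
Local Open Scope ring_scope.

(* The algebra A is taken to be 'M[K]_(d.+1) itself, with its usual trace. *)

Section LS.
Variables (K : fieldType) (d : nat).
Notation Mat := 'M[K]_d.+1.

Definition prim_idem (B : Mat) (th : 'I_d.+1 -> K) (i : 'I_d.+1) : Mat :=
  \prod_(j < d.+1 | j != i) ((th i - th j)^-1 *: (B - (th j)%:M)).

(* multiplicity-free with th an ordering of its d+1 (distinct) eigenvalues *)
Definition eig_ordering (B : Mat) (th : 'I_d.+1 -> K) : Prop :=
  injective th /\ forall i, eigenvalue B (th i).

Definition tridiag_cond (F : 'I_d.+1 -> Mat) (C : Mat) : Prop :=
  forall i j : 'I_d.+1,
    (((i.+1 < j)%N \/ (j.+1 < i)%N) -> F i *m C *m F j = 0) /\
    (((i.+1 = j)%N \/ (j.+1 = i)%N) -> F i *m C *m F j != 0).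

Definition leonard_system (A As : Mat) (th ths : 'I_d.+1 -> K) : Prop :=
  [/\ eig_ordering A th, eig_ordering As ths,
      tridiag_cond (prim_idem A th) As &
      tridiag_cond (prim_idem As ths) A].

Definition ls_a (A As : Mat) (ths : 'I_d.+1 -> K) (i : nat) : K :=
  \tr (prim_idem As ths (inord i) *m A).
Definition ls_x (A As : Mat) (ths : 'I_d.+1 -> K) (i : nat) : K :=
  if i is i'.+1 then
    \tr (prim_idem As ths (inord i) *m A *m prim_idem As ths (inord i') *m A)
  else 0.

(* three-term recursion: returns (p_{n-1}, p_n), p_{-1}=0, p_0=1,
   p_{i+1} = (X - a_i) p_i - x_i p_{i-1} *)
Fixpoint ppair (a x : nat -> K) (n : nat) : {poly K} * {poly K} :=
  match n with
  | 0 => (0, 1)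
  | n'.+1 => let: (q, p) := ppair a x n' in
             (p, ('X - (a n')%:P) * p - x n' *: q)
  end.
Definition ls_p (A As : Mat) (ths : 'I_d.+1 -> K) (i : nat) : {poly K} :=
  (ppair (ls_a A As ths) (ls_x A As ths) i).2.

Definition ls_u (A As : Mat) (th ths : 'I_d.+1 -> K) (i : nat) : {poly K} :=
  (ls_p A As ths i).[th ord0]^-1 *: ls_p A As ths i.

End LS.

(* Let E_i, E'_i be the primitive idempotents of A and A' = As, and q_j the
   polynomials p_j of the dual system. All of them have rank one, so
   E X E = tr(E X) E, and the tridiagonality of A' with respect to the E_i (and of
   A with respect to the E'_i) is irreducible. The three-term recurrence of the p_i
   is exactly what makes p_{i+1}(A) E'_0 = E'_{i+1} A p_i(A) E'_0; transposing
   gives E'_0 p_i(A) E'_i = E'_0 p_i(A). Computing tr(E'_0 p_i(A) q_j(A') E_0) by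
   moving E'_i through q_j(A'), or E_j through p_i(A), yields
     q_j(ths_i) p_i(th_0) nu = p_i(th_j) q_j(ths_0) nu,   nu = tr(E'_0 E_0).
   Irreducibility forces E_0 E'_k <> 0, whence nu <> 0 and p_i(th_0) <> 0. *)

From HB Require Import structures.
From mathcomp Require Import all_boot all_order all_algebra.
From mathcomp Require Import zify.
Import GRing.Theory.
Set Implicit Arguments. Unset Strict Implicit. Unset Printing Implicit Defensive.
Local Open Scope ring_scope.

Section HornerMx.
Variables (K : fieldType) (n : nat).
Implicit Types (B : 'M[K]_n.+1) (p : {poly K}).

Lemma horner_mx_mul_eigen m B (W : 'M[K]_(n.+1, m)) t p :
  B *m W = t *: W -> horner_mx B p *m W = p.[t] *: W.
Proof.
move=> BW; elim/poly_ind: p => [|p c IHp]; first by rewrite rmorph0 mul0mx horner0 scale0r.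
rewrite rmorphD rmorphM /= horner_mx_X horner_mx_C mulmxDl -mulmxE -mulmxA BW.
by rewrite -scalemxAr IHp mul_scalar_mx scalerA hornerMXaddC scalerDl mulrC.
Qed.

Lemma mul_horner_mx_eigen m B (W : 'M[K]_(m, n.+1)) t p :
  W *m B = t *: W -> W *m horner_mx B p = p.[t] *: W.
Proof.
move=> WB; elim/poly_ind: p => [|p c IHp]; first by rewrite rmorph0 mulmx0 horner0 scale0r.
rewrite rmorphD rmorphM /= horner_mx_X horner_mx_C mulmxDr -mulmxE mulmxA IHp.
by rewrite -scalemxAl WB scalerA mul_mx_scalar hornerMXaddC scalerDl.
Qed.

Lemma horner_mx_trmx B p : horner_mx B^T p = (horner_mx B p)^T.
Proof.
elim/poly_ind: p => [|p c IHp]; first by rewrite !rmorph0 trmx0.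
rewrite !rmorphD !rmorphM /= !horner_mx_X !horner_mx_C linearD /= tr_scalar_mx IHp.
by rewrite -!mulmxE -trmx_mul (comm_horner_mx p (comm_mx_refl B)).
Qed.

End HornerMx.

Definition lagrange_poly (K : fieldType) (n : nat) (th : 'I_n -> K) (i : 'I_n) : {poly K} :=
  \prod_(j < n | j != i) ((th i - th j)^-1 *: ('X - (th j)%:P)).

Lemma lagrange_polyE (K : fieldType) (n : nat) (th : 'I_n -> K) i k :
  injective th -> (lagrange_poly th i).[th k] = (i == k)%:R.
Proof.
move=> th_inj; rewrite /lagrange_poly horner_prod; have [<-|ik] := eqVneq i k.
  apply: big1 => j ji; rewrite hornerZ !hornerE mulVf // subr_eq0.
  by apply: contra ji => /eqP/th_inj ->.
by rewrite (bigD1 k) 1?eq_sym //= hornerZ !hornerE subrr mulr0 mul0r.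
Qed.

Lemma prim_idem_lagrange (K : fieldType) (d : nat) (B : 'M[K]_d.+1) th i :
  prim_idem B th i = horner_mx B (lagrange_poly th i).
Proof.
rewrite /prim_idem /lagrange_poly rmorph_prod; apply: eq_bigr => j _.
by rewrite -mul_polyC rmorphM rmorphB /= !horner_mx_C horner_mx_X -mulmxE mul_scalar_mx.
Qed.

Section MultiplicityFree.
Variables (K : fieldType) (d : nat) (B : 'M[K]_d.+1) (th : 'I_d.+1 -> K).
Hypothesis B_th : eig_ordering B th.
Local Notation E := (prim_idem B th).

Lemma prod_XsubC_dvdp p : (forall k, root p (th k)) -> \prod_k ('X - (th k)%:P) %| p.
Proof.
move=> p_th; have -> : \prod_k ('X - (th k)%:P) =
    \prod_(z <- [seq th k | k <- enum 'I_d.+1]) ('X - z%:P) by rewrite big_map big_enum.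
apply: uniq_roots_dvdp; first by apply/allP => _ /mapP [k _ ->].
by rewrite uniq_rootsE map_inj_uniq ?enum_uniq; case: B_th.
Qed.

Lemma char_poly_multfree : char_poly B = \prod_k ('X - (th k)%:P).
Proof.
have dvdB : \prod_k ('X - (th k)%:P) %| char_poly B.
  by apply: prod_XsubC_dvdp => k; rewrite -eigenvalue_root_char; case: B_th.
apply/esym/eqP; rewrite -eqp_monic ?monic_prod_XsubC ?char_poly_monic //.
by rewrite -dvdp_size_eqp // -big_enum size_prod_XsubC size_char_poly size_enum_ord.
Qed.

Lemma horner_mx_multfree_eq0 p : (forall k, root p (th k)) -> horner_mx B p = 0.
Proof.
move=> /prod_XsubC_dvdp /dvdpP [q ->].
by rewrite rmorphM /= -char_poly_multfree Cayley_Hamilton mulr0.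
Qed.

Lemma mulmx_prim_idem i : B *m E i = th i *: E i.
Proof.
have : horner_mx B (('X - (th i)%:P) * lagrange_poly th i) = 0.
  apply: horner_mx_multfree_eq0 => k; have [th_inj _] := B_th.
  rewrite rootE hornerM lagrange_polyE // !hornerE.
  by have [->|] := eqVneq i k; rewrite ?subrr ?mul0r ?mulr0.
rewrite rmorphM rmorphB /= horner_mx_X horner_mx_C -prim_idem_lagrange.
by rewrite -mulmxE mulmxBl mul_scalar_mx => /eqP; rewrite subr_eq0 => /eqP.
Qed.

Lemma prim_idem_mulmx i : E i *m B = th i *: E i.
Proof.
rewrite prim_idem_lagrange (comm_horner_mx _ (comm_mx_refl B)).
by rewrite -prim_idem_lagrange mulmx_prim_idem.
Qed.

Lemma prim_idem_mul i j : E i *m E j = if i == j then E i else 0.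
Proof.
have [th_inj _] := B_th.
rewrite {1}prim_idem_lagrange (horner_mx_mul_eigen _ (mulmx_prim_idem j)).
by rewrite lagrange_polyE //; case: eqP => [->|_]; rewrite ?scale1r ?scale0r.
Qed.

Lemma sum_prim_idem : \sum_i E i = 1.
Proof.
have [th_inj _] := B_th.
apply/eqP; rewrite -subr_eq0; apply/eqP.
rewrite (eq_bigr _ (fun i _ => prim_idem_lagrange B th i)) -rmorph_sum.
rewrite -(rmorph1 (horner_mx B)) -rmorphB; apply: horner_mx_multfree_eq0 => k.
rewrite rootE !hornerE horner_sum (bigD1 k) //= big1 ?lagrange_polyE ?eqxx ?addr0 ?subrr //.
by move=> j jk; rewrite lagrange_polyE // (negPf jk).
Qed.

Lemma mxrank_eigenspace_multfree i : \rank (eigenspace B (th i)) = 1%N.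
Proof.
have [th_inj th_eig] := B_th.
have rank_ge1 j : (1 <= \rank (eigenspace B (th j)))%N.
  have /eigenvalueP [v /eigenspaceP v_eig v_neq0] := th_eig j.
  by rewrite (leq_trans _ (mxrankS v_eig)) // lt0n mxrank_eq0.
have := mxdirect_sum_eigenspace B (P := predT) (a_ := th) (fun j k _ _ => @th_inj j k).
move/mxdirectP => /= rank_sum.
have sum_ge : (d <= \sum_(j < d.+1 | j != i) \rank (eigenspace B (th j)))%N.
  have := @leq_sum _ (index_enum 'I_d.+1) (fun j => j != i) (fun _ => 1%N) _
    (fun j _ => rank_ge1 j).
  by rewrite sum1_card cardC1 card_ord.
have split_i : (\sum_j \rank (eigenspace B (th j)) = \rank (eigenspace B (th i)) +
    \sum_(j < d.+1 | j != i) \rank (eigenspace B (th j)))%N by rewrite (bigD1 i).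
have := rank_leq_row (\sum_j eigenspace B (th j))%MS.
rewrite rank_sum split_i; have := rank_ge1 i; lia.
Qed.

Lemma mxrank_prim_idem i : \rank (E i) = 1%N.
Proof.
have [th_inj th_eig] := B_th.
apply/eqP; rewrite eqn_leq -{1}(mxrank_eigenspace_multfree i).
rewrite mxrankS ?(introT eigenspaceP (prim_idem_mulmx i)) //=.
have /eigenvalueP [v v_eig v_neq0] := th_eig i.
rewrite lt0n mxrank_eq0; apply: contra v_neq0 => /eqP E0.
have := mul_horner_mx_eigen (lagrange_poly th i) v_eig.
by rewrite -prim_idem_lagrange E0 mulmx0 lagrange_polyE // eqxx scale1r => <-.
Qed.
End MultiplicityFree.

Section RankOne.
Variables (K : fieldType) (n : nat).
Implicit Types (E M X Y : 'M[K]_n).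

Lemma mxrank1_outer E :
  \rank E = 1%N -> exists (c : 'cV[K]_n) (r : 'rV[K]_n), E = c *m r.
Proof.
move=> rkE; have := mulmx_base E.
by move: (col_base E) (row_base E); rewrite rkE => c r <-; exists c, r.
Qed.

Lemma mxrank1_sandwich E X : \rank E = 1%N -> E *m X *m E = \tr (E *m X) *: E.
Proof.
move=> /mxrank1_outer [c [r ->]].
have -> : c *m r *m X *m (c *m r) = c *m (r *m X *m c) *m r by rewrite !mulmxA.
rewrite [r *m X *m c]mx11_scalar mul_mx_scalar -scalemxAl; congr (_ *: _).
by rewrite -[in RHS]mulmxA (mxtrace_mulC c) {2}[r *m X *m c]mx11_scalar mxtrace_scalar.
Qed.

Lemma mulmx_cV_rV_eq0 (c : 'cV[K]_n) (r : 'rV[K]_n) : c *m r = 0 -> c = 0 \/ r = 0.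
Proof.
have [->|r_neq0] := eqVneq r 0; first by right.
have r_free : row_free r by rewrite /row_free rank_rV r_neq0.
by move/eqP; rewrite mulmx_free_eq0 // => /eqP; left.
Qed.

Lemma mxrank1_cancel_l E M Y :
  \rank E = 1%N -> M *m E != 0 -> M *m E *m Y = 0 -> E *m Y = 0.
Proof.
move=> /mxrank1_outer [c [r ->]] ME_neq0 MEY0.
have : (M *m c) *m (r *m Y) = 0 by rewrite -MEY0 !mulmxA.
case/mulmx_cV_rV_eq0 => [Mc0|rY0].
  by move: ME_neq0; rewrite mulmxA Mc0 mul0mx eqxx.
by rewrite -mulmxA rY0 mulmx0.
Qed.

Lemma mxrank1_cancel_r E M Y :
  \rank E = 1%N -> E *m M != 0 -> Y *m E *m M = 0 -> Y *m E = 0.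
Proof.
move=> /mxrank1_outer [c [r ->]] EM_neq0 YEM0.
have : (Y *m c) *m (r *m M) = 0 by rewrite -YEM0 !mulmxA.
case/mulmx_cV_rV_eq0 => [Yc0|rM0].
  by rewrite mulmxA Yc0 mul0mx.
by move: EM_neq0; rewrite -mulmxA rM0 mulmx0 eqxx.
Qed.
End RankOne.

Record rank1_resolution (K : fieldType) (d : nat) (F : nat -> 'M[K]_d.+1) : Prop :=
  Rank1Resolution {
    res_sum1 : \sum_(l < d.+1) F l = 1;
    res_mul : forall k l, (k <= d)%N -> (l <= d)%N ->
      F k *m F l = if k == l then F k else 0;
    res_rank1 : forall k, (k <= d)%N -> \rank (F k) = 1%N }.

Definition tridiagonal (K : fieldType) (d : nat) (F : nat -> 'M[K]_d.+1) C : Prop :=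
  forall k l, (k <= d)%N -> (l <= d)%N -> (k.+1 < l)%N \/ (l.+1 < k)%N ->
    F k *m C *m F l = 0.

Section Resolution.
Variables (K : fieldType) (d : nat) (F : nat -> 'M[K]_d.+1).
Hypothesis F_res : rank1_resolution F.
Implicit Types X Y : 'M[K]_d.+1.

Lemma resolution_ext X Y : (forall l, (l <= d)%N -> F l *m X = F l *m Y) -> X = Y.
Proof.
move=> FXY; rewrite -[X]mul1r -[Y]mul1r -(res_sum1 F_res) !mulr_suml.
by apply: eq_bigr => l _; rewrite -mulmxE FXY // -ltnS.
Qed.

Lemma mulmx_resolution_single X Y k : (k <= d)%N ->
  (forall l, (l <= d)%N -> l != k -> X *m F l *m Y = 0) -> X *m Y = X *m F k *m Y.
Proof.
move=> kd FXY0.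
have -> : X *m Y = \sum_(l < d.+1) X *m F l *m Y.
  by rewrite -mulmx_suml -mulmx_sumr (res_sum1 F_res) mulmx1.
have kd' : (k < d.+1)%N by [].
rewrite (bigD1 (Ordinal kd')) // big1 => [|l lk]; first exact: addr0.
apply: FXY0; first by rewrite -ltnS.
by apply: contra lk => /eqP lk; apply/eqP/val_inj.
Qed.

Variable C : 'M[K]_d.+1.
Hypothesis C_tri : tridiagonal F C.

Lemma tridiagonal_mulmx_idem i : (i < d)%N ->
  C *m F i = (if i is i'.+1 then F i' *m C *m F i else 0)
             + F i *m C *m F i + F i.+1 *m C *m F i.
Proof.
move=> id; apply: resolution_ext => l ld; rewrite !mulmxDr !mulmxA.
rewrite !(res_mul F_res) ?(ltnW id) //.
case: i id => [|i] id /=.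
  rewrite mulmx0 add0r; case: l ld => [|[|l]] ld /=; rewrite ?mul0mx ?addr0 ?add0r //.
  by rewrite C_tri //; right.
rewrite !mulmxA (res_mul F_res) //; last by rewrite ltnW // ltnW.
have [far|[->|[->|->]]] :
  ((l.+1 < i.+1)%N \/ (i.+2 < l)%N) \/ l = i \/ l = i.+1 \/ l = i.+2 by lia.
- have -> : (l == i) = false by apply/eqP; lia.
  have -> : (l == i.+1) = false by apply/eqP; lia.
  have -> : (l == i.+2) = false by apply/eqP; lia.
  by rewrite (C_tri ld (ltnW id) far) !mul0mx !addr0.
- by rewrite eqxx !ltn_eqF ?mul0mx ?addr0.
- by rewrite eqxx gtn_eqF ?ltn_eqF ?mul0mx ?addr0 ?add0r.
- by rewrite eqxx !gtn_eqF ?mul0mx ?add0r.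
Qed.

Lemma tridiagonal_annihilator Y : (forall k, (k < d)%N -> F k *m C *m F k.+1 != 0) ->
  C *m Y = Y *m C -> F 0%N *m Y = 0 -> Y = 0.
Proof.
move=> C_irr CY FY0.
suff FY h : (h <= d)%N -> forall l, (l <= h)%N -> F l *m Y = 0.
  by apply: resolution_ext => l ld; rewrite mulmx0 (FY d).
elim: h => [_ l|h IH hd l]; first by rewrite leqn0 => /eqP ->.
rewrite leq_eqVlt ltnS => /orP [/eqP -> {l}|]; last exact: IH (ltnW hd) l.
have FhCFY : F h *m C *m F h.+1 *m Y = 0.
  rewrite -(mulmx_resolution_single (X := F h *m C) (Y := Y) hd) => [|k kd kh].
    by rewrite -mulmxA CY mulmxA (IH (ltnW hd) h (leqnn h)) mul0mx.
  have [k_le_h|h_lt_k] := leqP k h.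
    by rewrite -mulmxA (IH (ltnW hd) k k_le_h) mulmx0.
  by rewrite (C_tri (ltnW hd) kd) ?mul0mx //; left; move/eqP: kh; lia.
exact: mxrank1_cancel_l (res_rank1 F_res hd) (C_irr h hd) FhCFY.
Qed.
End Resolution.

Lemma ppairS (K : fieldType) (a x : nat -> K) n : ppair a x n.+1 =
  ((ppair a x n).2, ('X - (a n)%:P) * (ppair a x n).2 - x n *: (ppair a x n).1).
Proof. by rewrite /=; case: (ppair a x n). Qed.

Lemma ppair_recurrence (K : fieldType) (a x : nat -> K) n : x 0%N = 0 ->
  (ppair a x n.+1).2 = ('X - (a n)%:P) * (ppair a x n).2 - x n *: (ppair a x n.-1).2.
Proof.
move=> x0; case: n => [|n]; first by rewrite /= x0 !scale0r.
by rewrite [ppair a x n.+2]ppairS [ppair a x n.+1]ppairS.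
Qed.

Section Recurrence.
Variables (K : fieldType) (d : nat) (F : nat -> 'M[K]_d.+1) (C : 'M[K]_d.+1).

Definition rec_a n := \tr (F n *m C).
Definition rec_x n := if n is n'.+1 then \tr (F n *m C *m F n' *m C) else 0.
Definition rec_poly n := (ppair rec_a rec_x n).2.
Definition rec_vec n := horner_mx C (rec_poly n) *m F 0%N.

Lemma rec_vecS n :
  rec_vec n.+1 = C *m rec_vec n - rec_a n *: rec_vec n - rec_x n *: rec_vec n.-1.
Proof.
rewrite /rec_vec /rec_poly ppair_recurrence // -mul_polyC.
rewrite !rmorphB !rmorphM /= rmorphB /= horner_mx_X !horner_mx_C -!mulmxE.
by rewrite !mulmxBl !mul_scalar_mx -!scalemxAl !mulmxA.
Qed.

Hypotheses (F_res : rank1_resolution F) (C_tri : tridiagonal F C).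
Local Notation T := rec_vec.

Lemma rec_vec_step i : (i < d)%N -> F i *m T i = T i ->
    (forall i', i = i'.+1 -> F i' *m T i' = T i' /\ T i = F i *m C *m T i') ->
  T i.+1 = F i.+1 *m C *m T i.
Proof.
move=> id FT_T prev; rewrite rec_vecS -{1}FT_T mulmxA.
rewrite (tridiagonal_mulmx_idem F_res C_tri id).
rewrite (mxrank1_sandwich _ (res_rank1 F_res (ltnW id))) -/(rec_a i).
rewrite !mulmxDl -scalemxAl FT_T -[F i.+1 *m C *m F i *m T i]mulmxA FT_T.
case: i id FT_T prev => [|i] id FT_T prev /=.
  by rewrite mul0mx add0r scale0r subr0 addrAC subrr add0r.
have [Fi_T T_eq] := prev i erefl.
have x_term : F i *m C *m F i.+1 *m T i.+1 = rec_x i.+1 *: T i.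
  rewrite -mulmxA FT_T T_eq -{1}Fi_T.
  have -> : F i *m C *m (F i.+1 *m C *m (F i *m T i)) =
            F i *m (C *m F i.+1 *m C) *m F i *m T i by rewrite !mulmxA.
  rewrite (mxrank1_sandwich _ (res_rank1 F_res (ltnW (ltnW id)))) -scalemxAl Fi_T.
  by rewrite /rec_x !mulmxA -(mulmxA (F i *m C)) mxtrace_mulC !mulmxA.
by rewrite x_term -/(rec_x i.+1) [X in X - _ = _]addrAC addrK addrAC subrr add0r.
Qed.

Lemma rec_vec_spec i : (i <= d)%N -> F i *m T i = T i /\
  (forall i', i = i'.+1 -> F i' *m T i' = T i' /\ T i = F i *m C *m T i').
Proof.
elim: i => [_|i IH id].
  by split=> // ; rewrite /rec_vec /rec_poly /= rmorph1 mul1mx (res_mul F_res) // eqxx.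
have [FT_T prev] := IH (ltnW id).
have TS := rec_vec_step id FT_T prev.
split=> [|_ [<-] //]; by rewrite TS !mulmxA (res_mul F_res) // eqxx.
Qed.

Lemma rec_vec_idem i : (i <= d)%N -> F i *m T i = T i.
Proof. by case/rec_vec_spec. Qed.

Lemma rec_vec_succ i : (i < d)%N -> T i.+1 = F i.+1 *m C *m T i.
Proof. by move/rec_vec_spec => [_ /(_ i erefl) []]. Qed.

Lemma rec_vec_neq0 i : (forall k, (k < d)%N -> F k.+1 *m C *m F k != 0) ->
  (i <= d)%N -> T i != 0.
Proof.
move=> C_irr; elim: i => [_|i IH id].
  by rewrite /rec_vec /rec_poly /= rmorph1 mul1mx -mxrank_eq0 (res_rank1 F_res).
rewrite (rec_vec_succ id); apply: contra (C_irr i id) => /eqP T0.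
apply/eqP; apply: (mxrank1_cancel_r (M := T i) (res_rank1 F_res (ltnW id))).
  by rewrite rec_vec_idem ?IH // ltnW.
by rewrite -mulmxA rec_vec_idem // ltnW.
Qed.
End Recurrence.

Lemma eq_ppair (K : fieldType) (a a' x x' : nat -> K) :
  a =1 a' -> x =1 x' -> ppair a x =1 ppair a' x'.
Proof. by move=> aa' xx'; elim=> [//|n IHn]; rewrite !ppairS IHn aa' xx'. Qed.

Section Transpose.
Variables (K : fieldType) (d : nat) (F : nat -> 'M[K]_d.+1) (C : 'M[K]_d.+1).
Local Notation Ft := (fun n => (F n)^T).

Lemma rank1_resolution_tr : rank1_resolution F -> rank1_resolution Ft.
Proof.
case=> F_sum1 F_mul F_rank1; split=> [|k l kd ld|k kd].
- by rewrite -linear_sum /= F_sum1 trmx1.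
- by rewrite -trmx_mul F_mul // eq_sym; case: eqP => [->|_]; rewrite ?trmx0.
- by rewrite mxrank_tr F_rank1.
Qed.

Lemma tridiagonal_tr : tridiagonal F C -> tridiagonal Ft C^T.
Proof. by move=> C_tri k l kd ld kl; rewrite -!trmx_mul mulmxA C_tri ?trmx0 //; lia. Qed.

Lemma rec_poly_tr n : rec_poly Ft C^T n = rec_poly F C n.
Proof.
rewrite /rec_poly (eq_ppair (a' := rec_a F C) (x' := rec_x F C)) // => [k|[|k]] //.
  by rewrite /rec_a -trmx_mul mxtrace_tr mxtrace_mulC.
by rewrite /rec_x -!trmx_mul mxtrace_tr !mulmxA mxtrace_mulC !mulmxA.
Qed.

Lemma idem0_rec_poly_idem i : rank1_resolution F -> tridiagonal F C -> (i <= d)%N ->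
  F 0%N *m horner_mx C (rec_poly F C i) *m F i = F 0%N *m horner_mx C (rec_poly F C i).
Proof.
move=> F_res C_tri id.
have := rec_vec_idem (rank1_resolution_tr F_res) (tridiagonal_tr C_tri) id.
by rewrite /rec_vec rec_poly_tr horner_mx_trmx -!trmx_mul => /trmx_inj.
Qed.
End Transpose.

(* For [k > d], [inord k] is [ord0]; all lemmas below only use [k <= d]. *)
Definition prim_idemn (K : fieldType) (d : nat) (B : 'M[K]_d.+1) th (k : nat) :=
  prim_idem B th (inord k).

Section PrimIdemNat.
Variables (K : fieldType) (d : nat) (B C : 'M[K]_d.+1) (th : 'I_d.+1 -> K).
Local Notation E := (prim_idemn B th).

Lemma tridiagonal_prim_idemn : tridiag_cond (prim_idem B th) C -> tridiagonal E C.
Proof. by move=> B_C k l kd ld kl; apply: (B_C (inord k) (inord l)).1; rewrite !inordK. Qed.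

Lemma prim_idemn_tridiag_neq0 k : tridiag_cond (prim_idem B th) C -> (k < d)%N ->
  E k *m C *m E k.+1 != 0 /\ E k.+1 *m C *m E k != 0.
Proof.
move=> B_C kd; have kd' : (k < d.+1)%N := ltnW kd.
split; [apply: (B_C (inord k) (inord k.+1)).2; left
      |apply: (B_C (inord k.+1) (inord k)).2; right]; by rewrite !inordK.
Qed.

Hypothesis B_th : eig_ordering B th.

Lemma rank1_resolution_prim_idemn : rank1_resolution E.
Proof.
split=> [|k l kd ld|k kd]; rewrite /prim_idemn.
- by rewrite -(sum_prim_idem B_th); apply: eq_bigr => i _; rewrite inord_val.
- rewrite (prim_idem_mul B_th); congr (if _ then _ else _).
  by apply/eqP/eqP => [/(congr1 val)|->]; rewrite /= ?inordK.
- exact: mxrank_prim_idem.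
Qed.

Lemma horner_mx_prim_idemn p k : horner_mx B p *m E k = p.[th (inord k)] *: E k.
Proof. exact/horner_mx_mul_eigen/mulmx_prim_idem. Qed.

Lemma prim_idemn_horner_mx p k : E k *m horner_mx B p = p.[th (inord k)] *: E k.
Proof. exact/mul_horner_mx_eigen/prim_idem_mulmx. Qed.

Lemma idem0_mul_prim_idemn_neq0 ths k : eig_ordering C ths ->
  tridiag_cond (prim_idem B th) C -> (k <= d)%N -> E 0%N *m prim_idemn C ths k != 0.
Proof.
move=> C_ths B_C kd; apply/eqP => E0Y0.
have Y0 : prim_idemn C ths k = 0.
  apply: (tridiagonal_annihilator rank1_resolution_prim_idemn
           (tridiagonal_prim_idemn B_C)) => //.
    by move=> l ld; case: (prim_idemn_tridiag_neq0 B_C ld).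
  by rewrite /prim_idemn (mulmx_prim_idem C_ths) (prim_idem_mulmx C_ths).
by have := mxrank_prim_idem C_ths (inord k); rewrite -/(prim_idemn C ths k) Y0 mxrank0.
Qed.
End PrimIdemNat.

Section LeonardSystem.
Variables (K : fieldType) (d : nat) (A As : 'M[K]_d.+1) (th ths : 'I_d.+1 -> K).
Hypotheses (A_th : eig_ordering A th) (As_ths : eig_ordering As ths).
Hypotheses (E_As : tridiag_cond (prim_idem A th) As)
           (Es_A : tridiag_cond (prim_idem As ths) A).
Local Notation E := (prim_idemn A th).
Local Notation Es := (prim_idemn As ths).
Local Notation p := (rec_poly Es A).
Local Notation ps := (rec_poly E As).

Let E_res := rank1_resolution_prim_idemn A_th.
Let Es_res := rank1_resolution_prim_idemn As_ths.
Let E_tri := tridiagonal_prim_idemn E_As.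
Let Es_tri := tridiagonal_prim_idemn Es_A.

Lemma rec_poly_th0_neq0 i : (i <= d)%N -> (p i).[th (inord 0%N)] != 0.
Proof.
move=> id; apply/eqP => p0.
move/eqP: (idem0_mul_prim_idemn_neq0 A_th As_ths E_As id); apply.
have T_neq0 : rec_vec Es A i != 0.
  apply: (rec_vec_neq0 Es_res Es_tri) id => k kd.
  by case: (prim_idemn_tridiag_neq0 Es_A kd).
apply: (mxrank1_cancel_r (M := rec_vec Es A i) (res_rank1 Es_res id)).
  by rewrite (rec_vec_idem Es_res Es_tri id).
rewrite -mulmxA (rec_vec_idem Es_res Es_tri id).
by rewrite /rec_vec mulmxA (prim_idemn_horner_mx A_th) p0 scale0r mul0mx.
Qed.

Lemma tr_idem0_neq0 : \tr (Es 0%N *m E 0%N) != 0.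
Proof.
apply/eqP => tr0; move/eqP: (idem0_mul_prim_idemn_neq0 A_th As_ths E_As (leq0n d)); apply.
apply: (mxrank1_cancel_l (M := Es 0%N) (res_rank1 E_res (leq0n d))).
  by have := idem0_mul_prim_idemn_neq0 As_ths A_th Es_A (leq0n d).
by rewrite mxrank1_sandwich ?(res_rank1 Es_res) // tr0 scale0r.
Qed.

Lemma trace_duality i j : (i <= d)%N -> (j <= d)%N ->
  (ps j).[ths (inord i)] * (p i).[th (inord 0%N)] * \tr (Es 0%N *m E 0%N) =
  (p i).[th (inord j)] * (ps j).[ths (inord 0%N)] * \tr (Es 0%N *m E 0%N).
Proof.
move=> id jd; set P := horner_mx A (p i); set Q := horner_mx As (ps j).
have EsP_Es : Es 0%N *m P *m Es i = Es 0%N *m P := idem0_rec_poly_idem Es_res Es_tri id.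
have E_QE : E j *m (Q *m E 0%N) = Q *m E 0%N := rec_vec_idem E_res E_tri jd.
transitivity (\tr (Es 0%N *m P *m Q *m E 0%N)).
  rewrite -EsP_Es -(mulmxA _ (Es i)) (prim_idemn_horner_mx As_ths) -scalemxAr -scalemxAl.
  by rewrite mxtraceZ EsP_Es -mulmxA (horner_mx_prim_idemn A_th) -scalemxAr mxtraceZ mulrA.
rewrite -mulmxA -E_QE !mulmxA -(mulmxA _ P) (horner_mx_prim_idemn A_th).
rewrite -scalemxAr -!scalemxAl mxtraceZ -!mulmxA E_QE.
by rewrite mulmxA (prim_idemn_horner_mx As_ths) -scalemxAl mxtraceZ mulrA.
Qed.

End LeonardSystem.

Lemma ls_pE (K : fieldType) (d : nat) (A As : 'M[K]_d.+1) ths :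
  ls_p A As ths =1 rec_poly (prim_idemn As ths) A.
Proof. by []. Qed.

Theorem theorem14p6 (K : fieldType) (d : nat) (A As : 'M[K]_d.+1)
    (th ths : 'I_d.+1 -> K) :
  leonard_system A As th ths ->
  forall i j : 'I_d.+1,
    (ls_u A As th ths i).[th j] = (ls_u As A ths th j).[ths i].
Proof.
case=> A_th As_ths E_As Es_A i j.
have p_neq0 := rec_poly_th0_neq0 A_th As_ths E_As Es_A (leq_ord i).
have ps_neq0 := rec_poly_th0_neq0 As_ths A_th Es_A E_As (leq_ord j).
have := trace_duality A_th As_ths E_As Es_A (leq_ord i) (leq_ord j).
move/(mulIf (tr_idem0_neq0 A_th As_ths E_As Es_A)).
rewrite !inord_val (inord_val ord0) in p_neq0 ps_neq0 * => duality.
rewrite /ls_u !hornerZ !ls_pE [LHS]mulrC [RHS]mulrC; apply/eqP.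
by rewrite eqr_div // duality.
Qed.
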